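(* Let $S$ be a right coherent monoid and let $A$ be a (right) $S$-act. Then $A$ is almost pure if and only if $A$ is absolutely pure.
   Context: Let $S$ be a monoid. A (right) $S$-act is a set $A$ with a map $A\times S\to A$, $(a,s)\mapsto as$, such that $a1=a$ and $a(st)=(as)t$ for all $a\in A$, $s,t\in S$; $S$-morphisms, subacts and congruences of $S$-acts are defined as usual for unary algebras. For a set $X$, the free $S$-act $F_S(X)$ consists of all formal products $xs$ ($x\in X$, $s\in S$), with $xs=yt$ iff $x=y$ and $s=t$, and action $(xs)t=x(st)$. An $S$-act is finitely presented if it is isomorphic to $F_S(X)/\rho$ with $X$ finite and $\rho$ a finitely generated congruence; it is finitely generated if it equals $a_1S\cup\dots\cup a_nS$ for finitely many elements. $S$ is right coherent if every finitely generated subact of every finitely presented $S$-act is finitely presented. Given an $S$-act $A$ and a set $X$ of variables, an equation over $A$ is an expression of one of the forms $xs=yt$, $xs=xt$ or $xs=a$ with $x,y\in X$, $s,t\in S$, $a\in A$. If $A$ is a subact of an $S$-act $B$, a solution in $B$ of a set $\Sigma$ of equations over $A$ is a family $(b_x)_{x\in X}$ in $B$ with $b_xs=b_yt$ for each equation $xs=yt$ in $\Sigma$ and $b_xs=a$ for each equation $xs=a$ in $\Sigma$. $\Sigma$ is consistent if it has a solution in some $S$-act containing $A$ as a subact. For $n\in\mathbb N$, $A$ is $n$-absolutely pure if every finite consistent set of equations over $A$ involving at most $n$ variables has a solution in $A$; $A$ is almost pure if it is $1$-absolutely pure, and absolutely pure if it is $n$-absolutely pure for every $n\in\mathbb N$.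 *)

From Stdlib Require Import ProofIrrelevance List.
From mathcomp Require Import all_boot.
Set Implicit Arguments. Unset Strict Implicit. Unset Printing Implicit Defensive.

Record monoid := Monoid {
  mcar :> Type;
  mmul : mcar -> mcar -> mcar;
  mone : mcar;
  mmulA : forall a b c, mmul a (mmul b c) = mmul (mmul a b) c;
  mmul1s : forall a, mmul mone a = a;
  mmuls1 : forall a, mmul a mone = a }.

Record act (S : monoid) := Act {
  acar :> Type;
  aact : acar -> S -> acar;
  aact1 : forall a, aact a (mone S) = a;
  aactM : forall a s t, aact a (@mmul S s t) = aact (aact a s) t }.


Section Acts.
Variable S : monoid.

Definition is_morphism (A B : act S) (f : A -> B) : Prop :=
  forall (a : A) (s : S), f (aact a s) = aact (f a) s.

Definition subact_closed (A : act S) (P : A -> Prop) : Prop :=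
  forall (a : A) (s : S), P a -> P (aact a s).

Section Sub.
Variables (A : act S) (P : A -> Prop) (HP : subact_closed P).
Definition sub_aact (u : {a : A | P a}) (s : S) : {a : A | P a} :=
  exist P (aact (proj1_sig u) s) (HP s (proj2_sig u)).
Lemma sub_aact1 u : sub_aact u (mone S) = u.
Proof.
case: u => a Pa; rewrite /sub_aact /=.
apply: eq_sig_hprop => /=; first by move=> x p q; apply: proof_irrelevance.
by rewrite aact1.
Qed.
Lemma sub_aactM u s t : sub_aact u (@mmul S s t) = sub_aact (sub_aact u s) t.
Proof.
case: u => a Pa; rewrite /sub_aact /=.
apply: eq_sig_hprop => /=; first by move=> x p q; apply: proof_irrelevance.
by rewrite aactM.
Qed.
Definition sub_act : act S := Act sub_aact1 sub_aactM.
End Sub.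

Definition fin_generated (A : act S) (P : A -> Prop) : Prop :=
  exists gens : list A,
    (forall g, In g gens -> P g) /\
    (forall a, P a <-> exists g s, In g gens /\ a = aact g s).

(* The free S-act F_S(X) on the finite set X = 'I_m: elements x s. *)
Section Free.
Variable m : nat.
Definition free_aact (u : 'I_m * S) (t : S) : 'I_m * S := (u.1, @mmul S u.2 t).
Lemma free_aact1 u : free_aact u (mone S) = u.
Proof. by case: u => x s; rewrite /free_aact /= mmuls1. Qed.
Lemma free_aactM u s t : free_aact u (@mmul S s t) = free_aact (free_aact u s) t.
Proof. by case: u => x r; rewrite /free_aact /= mmulA. Qed.
Definition free_act : act S := Act free_aact1 free_aactM.
End Free.

Definition is_congruence (A : act S) (rho : A -> A -> Prop) : Prop :=
  (forall a, rho a a) /\ (forall a b, rho a b -> rho b a) /\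
  (forall a b c, rho a b -> rho b c -> rho a c) /\
  (forall a b s, rho a b -> rho (aact a s) (aact b s)).

Definition gen_congruence (A : act S) (R : list (A * A)) (a b : A) : Prop :=
  forall rho : A -> A -> Prop, is_congruence rho ->
    (forall p, In p R -> rho p.1 p.2) -> rho a b.

(* A is finitely presented: A is isomorphic to F_S(X)/rho with X finite and
   rho a finitely generated congruence; i.e. there is a surjective S-morphism
   F_S(X) -> A whose kernel is a finitely generated congruence. *)
Definition fin_presented (A : act S) : Prop :=
  exists (m : nat) (R : list ((free_act m) * (free_act m)))
         (f : free_act m -> A),
    is_morphism f /\ (forall a, exists u, f u = a) /\
    (forall u v, f u = f v <-> gen_congruence R u v).

Definition right_coherent : Prop :=
  forall (F : act S), fin_presented F ->
  forall (P : F -> Prop) (HP : subact_closed P),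
    fin_generated P -> fin_presented (sub_act HP).

(* Equations over A in variables X: x s = y t (this includes the form
   x s = x t, taking y = x) and x s = a. *)
Inductive equation (X : Type) (A : act S) : Type :=
  | EqVar : X -> S -> X -> S -> equation X A
  | EqConst : X -> S -> A -> equation X A.

Definition is_solution (X : Type) (A B : act S) (f : A -> B)
    (E : list (equation X A)) (b : X -> B) : Prop :=
  forall e, In e E ->
    match e with
    | EqVar x s y t => aact (b x) s = aact (b y) t
    | EqConst x s a => aact (b x) s = f a
    end.

(* E is consistent: solvable in some S-act containing A as a subact
   (i.e. into which A embeds by an injective S-morphism). *)
Definition consistent (X : Type) (A : act S) (E : list (equation X A)) : Prop :=
  exists (B : act S) (f : A -> B),
    is_morphism f /\ injective f /\ exists b : X -> B, is_solution f E b.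

(* n-absolutely pure: every finite consistent system in at most n variables
   (w.l.o.g. the variables 'I_n) has a solution in A. *)
Definition n_absolutely_pure (n : nat) (A : act S) : Prop :=
  forall E : list (equation 'I_n A), consistent E ->
    exists b : 'I_n -> A, is_solution id E b.

Definition almost_pure (A : act S) : Prop := n_absolutely_pure 1 A.

Definition absolutely_pure (A : act S) : Prop :=
  forall n, n_absolutely_pure n A.

End Acts.

From mathcomp Require Import all_boot.
From Stdlib Require Import ProofIrrelevance FunctionalExtensionality PropExtensionality.
From Stdlib Require Import ClassicalEpsilon.
From Stdlib Require List.
Import List (In, flat_map, in_flat_map, in_app_iff, in_map_iff).
Set Implicit Arguments. Unset Strict Implicit. Unset Printing Implicit Defensive.

(* Absolute purity trivially implies almost purity.  For the converse we
   induct on the number of variables.  Let E be a consistent system in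
   x_0, ..., x_n, solved in some B containing A.  Let G be the act presented
   by the variable equations of E and P its subact generated by the classes
   of x_n and of the left-hand sides x s of the constant equations x s = a.
   By coherence P is finitely presented, so a morphism P -> A is given by
   finitely many values subject to finitely many relations; written in terms
   of the single unknown c, the image of x_n, these form a one-variable
   system which is consistent (B solves it) and hence solvable in A.
   Amalgamating G with A along the resulting morphism P -> A yields an
   extension of A in which E has a solution with last coordinate c in A.
   Substituting c for x_n leaves a consistent system in n variables. *)

Lemma sig_val_inj (T : Type) (Q : T -> Prop) (p q : {x | Q x}) :
  proj1_sig p = proj1_sig q -> p = q.
Proof. by move=> pq; apply: eq_sig_hprop pq => x u v; apply: proof_irrelevance. Qed.

Section Congruences.
Variables (S : monoid) (A : act S).

Lemma gen_congruence_congruence (R : list (A * A)) : is_congruence (gen_congruence R).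
Proof.
rewrite /gen_congruence; split; [|split; [|split]].
- by move=> a rho [refl _] _; apply: refl.
- move=> a b ab rho rhoC Rrho; have [_ [sym _]] := rhoC.
  exact: sym (ab rho rhoC Rrho).
- move=> a b c ab bc rho rhoC Rrho; have [_ [_ [trans _]]] := rhoC.
  exact: trans (ab rho rhoC Rrho) (bc rho rhoC Rrho).
- move=> a b s ab rho rhoC Rrho; have [_ [_ [_ comp]]] := rhoC.
  exact: comp (ab rho rhoC Rrho).
Qed.

Lemma gen_congruence_base (R : list (A * A)) p : In p R -> gen_congruence R p.1 p.2.
Proof. by move=> pR rho _; apply. Qed.

Lemma gen_congruence_kernel (B : act S) (h : A -> B) (R : list (A * A)) :
  is_morphism h -> (forall p, In p R -> h p.1 = h p.2) ->
  forall a b, gen_congruence R a b -> h a = h b.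
Proof.
move=> hM hR a b ab; apply: (ab (fun a b => h a = h b)) hR.
split; [by []|split; [|split]].
- by move=> ? ? ->.
- by move=> ? ? ? -> ->.
- by move=> ? ? s hab; rewrite !hM hab.
Qed.

End Congruences.

Section Quotient.
Variables (S : monoid) (A : act S) (rho : A -> A -> Prop).
Hypothesis rho_cong : is_congruence rho.

Definition quot_car := {p : A -> Prop | exists a, p = rho a}.

Definition quot_class (a : A) : quot_car := exist _ (rho a) (ex_intro _ a erefl).

Definition quot_rep (p : quot_car) : A :=
  proj1_sig (constructive_indefinite_description _ (proj2_sig p)).

Lemma quot_class_eq a b : quot_class a = quot_class b <-> rho a b.
Proof.
have [refl [sym [trans _]]] := rho_cong.
split=> [ab | rab].
  by have := refl b; rewrite -[rho b](f_equal (@proj1_sig _ _) ab).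
apply: sig_val_inj; apply: functional_extensionality => c.
apply: propositional_extensionality.
by split=> [ac | bc]; [apply: trans (sym _ _ rab) ac | apply: trans rab bc].
Qed.

Lemma quot_class_rep p : quot_class (quot_rep p) = p.
Proof.
apply: sig_val_inj; rewrite /quot_rep /=.
by case: constructive_indefinite_description.
Qed.

Lemma quot_class_surj p : exists a, quot_class a = p.
Proof. by exists (quot_rep p); apply: quot_class_rep. Qed.

Definition quot_aact (p : quot_car) (s : S) : quot_car := quot_class (aact (quot_rep p) s).

Lemma quot_aact_class a s : quot_aact (quot_class a) s = quot_class (aact a s).
Proof.
apply/quot_class_eq; have [_ [_ [_ comp]]] := rho_cong.
by apply/comp/quot_class_eq; rewrite quot_class_rep.
Qed.

Lemma quot_aact1 p : quot_aact p (mone S) = p.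
Proof. by case: (quot_class_surj p) => a <-; rewrite quot_aact_class aact1. Qed.

Lemma quot_aactM p s t : quot_aact p (mmul s t) = quot_aact (quot_aact p s) t.
Proof. by case: (quot_class_surj p) => a <-; rewrite !quot_aact_class aactM. Qed.

Definition quot_act : act S := Act quot_aact1 quot_aactM.

Lemma quot_class_morphism : is_morphism (quot_class : A -> quot_act).
Proof. by move=> a s; rewrite /= quot_aact_class. Qed.

End Quotient.

Section Presentations.
Variable S : monoid.

Definition free_lift (m : nat) (B : act S) (v : 'I_m -> B) (u : free_act S m) : B :=
  aact (v u.1) u.2.

Lemma free_lift_morphism m (B : act S) (v : 'I_m -> B) : is_morphism (free_lift v).
Proof. by case=> l r s; rewrite /free_lift /= aactM. Qed.

Lemma free_act_gen m (l : 'I_m) (s : S) :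
  ((l, s) : free_act S m) = aact ((l, mone S) : free_act S m) s.
Proof. by rewrite /= /free_aact /= mmul1s. Qed.

Lemma factor_surj_morphism (A P B : act S) (f : A -> P) (h : A -> B) :
  is_morphism f -> (forall p, exists a, f a = p) -> is_morphism h ->
  (forall a b, f a = f b -> h a = h b) ->
  exists g : P -> B, is_morphism g /\ forall a, g (f a) = h a.
Proof.
move=> fM fS hM hK; have [sec secK] := choice _ fS.
have hsec a : h (sec (f a)) = h a by apply/hK/secK.
exists (h \o sec); split=> [p s|] //=.
by rewrite -{1}[p]secK -fM hsec hM.
Qed.

Lemma presented_morphism m (R : list (free_act S m * free_act S m)) (P B : act S)
    (f : free_act S m -> P) (v : 'I_m -> B) :
  is_morphism f -> (forall p, exists u, f u = p) ->
  (forall u w, f u = f w -> gen_congruence R u w) ->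
  (forall uw, In uw R -> free_lift v uw.1 = free_lift v uw.2) ->
  exists g : P -> B, is_morphism g /\ forall u, g (f u) = free_lift v u.
Proof.
move=> fM fS fK vR; apply: factor_surj_morphism => //; first exact: free_lift_morphism.
by move=> u w /fK; apply: gen_congruence_kernel => //; apply: free_lift_morphism.
Qed.

Lemma quot_fin_presented m (R : list (free_act S m * free_act S m)) :
  fin_presented (quot_act (gen_congruence_congruence R)).
Proof.
exists m, R, (quot_class (gen_congruence R)); split; last split.
- exact: quot_class_morphism.
- exact: quot_class_surj.
- by move=> u v; apply: quot_class_eq (gen_congruence_congruence R) u v.
Qed.

Definition span (G : act S) (gens : list G) (g : G) : Prop :=
  exists x t, In x gens /\ g = aact x t.

Lemma span_closed (G : act S) (gens : list G) : subact_closed (span gens).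
Proof. by move=> g s [x [t [xg ->]]]; exists x, (mmul t s); rewrite aactM. Qed.

Lemma span_gen (G : act S) (gens : list G) x : In x gens -> span gens x.
Proof. by move=> xg; exists x, (mone S); rewrite aact1. Qed.

Lemma span_fin_generated (G : act S) (gens : list G) : fin_generated (span gens).
Proof.
exists gens; split=> [|g]; first exact: span_gen.
by rewrite /span; split=> [[x [t [xg ->]]] | [x [t [xg ->]]]]; exists x, t.
Qed.

End Presentations.

Section Amalgamation.
Variables (S : monoid) (G A : act S) (P : G -> Prop) (P_closed : subact_closed P).
Variable phi : sub_act P_closed -> A.
Hypothesis phiM : is_morphism phi.

(* Glue A to the part of G outside P, identifying g in P with phi g. *)
Definition amalg_car := (A + {g : G | ~ P g})%type.

Definition amalg_in (g : G) : amalg_car :=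
  match excluded_middle_informative (P g) with
  | left Pg => inl (phi (exist _ g Pg))
  | right nPg => inr (exist _ g nPg)
  end.

Definition amalg_aact (x : amalg_car) (s : S) : amalg_car :=
  match x with
  | inl a => inl (aact a s)
  | inr g => amalg_in (aact (proj1_sig g) s)
  end.

Lemma amalg_in_sub g (Pg : P g) : amalg_in g = inl (phi (exist _ g Pg)).
Proof.
rewrite /amalg_in; case: excluded_middle_informative => // Pg'.
by rewrite (proof_irrelevance _ Pg Pg').
Qed.

Lemma amalg_in_aact g s : amalg_aact (amalg_in g) s = amalg_in (aact g s).
Proof.
rewrite {1}/amalg_in; case: excluded_middle_informative => Pg //=.
rewrite (amalg_in_sub (P_closed s Pg)) -phiM.
by congr (inl (phi _)); apply: sig_val_inj.
Qed.

Lemma amalg_aact1 x : amalg_aact x (mone S) = x.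
Proof.
case: x => [a | [g nPg]] /=; first by rewrite aact1.
rewrite aact1 /amalg_in; case: excluded_middle_informative => // nPg'.
by rewrite (proof_irrelevance _ nPg nPg').
Qed.

Lemma amalg_aactM x s t : amalg_aact x (mmul s t) = amalg_aact (amalg_aact x s) t.
Proof. by case: x => [a | [g nPg]] /=; rewrite aactM // amalg_in_aact. Qed.

Definition amalg_act : act S := Act amalg_aact1 amalg_aactM.

Lemma amalgamation : exists (B : act S) (i : A -> B) (psi : G -> B),
  [/\ is_morphism i, injective i, is_morphism psi &
      forall g (Pg : P g), psi g = i (phi (exist _ g Pg))].
Proof.
exists amalg_act, inl, amalg_in; split=> //.
- by move=> a b [].
- by move=> g s; rewrite /= amalg_in_aact.
- exact: amalg_in_sub.
Qed.

End Amalgamation.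

Section Solutions.
Variables (S : monoid) (X : Type) (A B : act S) (e : A -> B) (b : X -> B).

Lemma is_solution_cat (E1 E2 : list (equation X A)) :
  is_solution e E1 b -> is_solution e E2 b -> is_solution e (E1 ++ E2) b.
Proof. by move=> sol1 sol2 q /in_app_iff [qE | qE]; [apply: sol1 | apply: sol2]. Qed.

Lemma is_solution_flat_map (Y : Type) (g : Y -> list (equation X A)) (l : list Y) :
  (forall y, In y l -> is_solution e (g y) b) -> is_solution e (flat_map g l) b.
Proof. by move=> sol q /in_flat_map [y [yl qg]]; apply: sol yl _ qg. Qed.

Lemma is_solution_subset (E1 E2 : list (equation X A)) :
  (forall q, In q E1 -> In q E2) -> is_solution e E2 b -> is_solution e E1 b.
Proof. by move=> sub sol q /sub; apply: sol. Qed.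

End Solutions.

Section Terms.
Variables (S : monoid) (A : act S).

(* A term [(Some a, s)] stands for the element a s of A, a term [(None, s)]
   for z s, where z is the only variable of a one-variable system. *)
Definition term := (option A * S)%type.

Definition term_eval (B : act S) (e : A -> B) (z : B) (p : term) : B :=
  aact (if p.1 is Some a then e a else z) p.2.

Definition term_scale (p : term) (s : S) : term := (p.1, mmul p.2 s).

Lemma term_eval_scale (B : act S) (e : A -> B) z p s :
  term_eval e z (term_scale p s) = aact (term_eval e z p) s.
Proof. exact: aactM. Qed.

(* There is no equation without variables, so [a s = a' t] is dropped; its
   truth is recovered from the injectivity of the embedding. *)
Definition term_equation (p q : term) : list (equation 'I_1 A) :=
  match p, q with
  | (None, s), (None, t) => [:: EqVar A ord0 s ord0 t]
  | (None, s), (Some a, t) => [:: EqConst ord0 s (aact a t)]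
  | (Some a, s), (None, t) => [:: EqConst ord0 t (aact a s)]
  | (Some _, _), (Some _, _) => [::]
  end.

Lemma term_equation_sound (B : act S) (e : A -> B) z p q :
  is_morphism e -> term_eval e z p = term_eval e z q ->
  is_solution e (term_equation p q) (fun _ => z).
Proof.
move=> eM; case: p => [[a|] s]; case: q => [[a'|] t]; rewrite /term_eval /= => pq r //=;
  by case=> // <-; rewrite ?eM.
Qed.

Lemma term_equation_complete (B : act S) (e : A -> B) z c p q :
  is_morphism e -> injective e -> term_eval e z p = term_eval e z q ->
  is_solution id (term_equation p q) (fun _ => c) -> term_eval id c p = term_eval id c q.
Proof.
move=> eM eI; case: p => [[a|] s]; case: q => [[a'|] t]; rewrite /term_eval /=.
- by move=> pq _; apply: eI; rewrite !eM.
all: by move=> _ /(_ _ (or_introl erefl)).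
Qed.

End Terms.

Section SubstLast.
Variables (S : monoid) (A : act S) (n : nat).
Implicit Type E : list (equation 'I_n.+1 A).

Definition subst_last_eq (c : A) (q : equation 'I_n.+1 A) : list (equation 'I_n A) :=
  match q with
  | EqVar x s y t =>
      match unlift ord_max x, unlift ord_max y with
      | Some x', Some y' => [:: EqVar A x' s y' t]
      | None, Some y' => [:: EqConst y' t (aact c s)]
      | Some x', None => [:: EqConst x' s (aact c t)]
      | None, None => [::]
      end
  | EqConst x s a =>
      if unlift ord_max x is Some x' then [:: EqConst x' s a] else [::]
  end.

Definition subst_last (c : A) E := flat_map (subst_last_eq c) E.

Definition extend_last (T : Type) (d : 'I_n -> T) (c : T) (x : 'I_n.+1) : T :=
  if unlift ord_max x is Some j then d j else c.

Lemma subst_last_solution (B : act S) (i : A -> B) E (beta : 'I_n.+1 -> B) c :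
  is_morphism i -> is_solution i E beta -> beta ord_max = i c ->
  is_solution i (subst_last c E) (beta \o lift ord_max).
Proof.
move=> iM sol betac q /in_flat_map [[x s y t | x s a] [qE]]; have := sol _ qE => /= eq.
- case: (unliftP ord_max x) eq => [x' -> | ->]; case: (unliftP ord_max y) => [y' -> | ->];
    by rewrite /= ?liftK ?unlift_none => eq -[] // <- /=; rewrite ?iM -?betac eq.
- case: (unliftP ord_max x) eq => [x' -> | ->];
    by rewrite /= ?liftK ?unlift_none => eq -[] // <-.
Qed.

Lemma extend_last_solution (B : act S) (i : A -> B) E (beta : 'I_n.+1 -> B) c d :
  is_morphism i -> injective i -> is_solution i E beta -> beta ord_max = i c ->
  is_solution id (subst_last c E) d -> is_solution id E (extend_last d c).
Proof.
move=> iM iI sol betac dsol q qE.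
have dq : is_solution id (subst_last_eq c q) d.
  by move=> r rq; apply: dsol; apply/in_flat_map; exists q.
case: q qE dq => [x s y t | x s a] qE dq; have := sol _ qE => /=; rewrite /extend_last.
- case: (unliftP ord_max x) dq => [x' -> | ->]; case: (unliftP ord_max y) => [y' -> | ->] /=;
    rewrite ?unlift_none ?liftK => dq; try by move=> _; rewrite (dq _ (or_introl erefl)).
  by rewrite betac -!iM; apply: iI.
- case: (unliftP ord_max x) dq => [x' -> | ->] /=; rewrite ?unlift_none ?liftK => dq.
    by move=> _; apply: dq _ (or_introl erefl).
  by rewrite betac -iM; apply: iI.
Qed.

End SubstLast.

Section LastCoordinate.
Variables (S : monoid) (A : act S) (n : nat) (E : list (equation 'I_n.+1 A)).

Notation F := (free_act S n.+1).

Definition var_relations : list (F * F) :=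
  flat_map (fun q => if q is EqVar x s y t then [:: ((x, s) : F, (y, t) : F)] else [::]) E.

Definition eqn_act : act S := quot_act (gen_congruence_congruence var_relations).

Definition eqn_class : F -> eqn_act := quot_class (gen_congruence var_relations).

Lemma eqn_class_morphism : is_morphism eqn_class.
Proof. exact: quot_class_morphism. Qed.

Lemma eqn_class_var x s y t :
  In (EqVar A x s y t) E -> eqn_class (x, s) = eqn_class (y, t).
Proof.
move=> qE; apply/(quot_class_eq (gen_congruence_congruence _)).
apply: (@gen_congruence_base _ _ _ ((x, s) : F, (y, t) : F)).
by apply/in_flat_map; exists (EqVar A x s y t); split=> //; left.
Qed.

(* Each anchor pairs an element of F with the term its value must take:
   x_n with the unknown z, and x s with a for each equation x s = a. *)
Definition anchors : list (F * term A) :=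
  ((ord_max, mone S), (None, mone S)) ::
  flat_map (fun q => if q is EqConst x s a then [:: ((x, s) : F, (Some a, mone S))]
                     else [::]) E.

Definition anchor_gens : list eqn_act := List.map (fun wp => eqn_class wp.1) anchors.

Definition anchor_act : act S := sub_act (@span_closed _ _ anchor_gens).

Lemma anchor_span wp : In wp anchors -> span anchor_gens (eqn_class wp.1).
Proof. by move=> wpA; apply: span_gen; apply/in_map_iff; exists wp. Qed.

Section Extension.
Variables (B : act S) (e : A -> B) (b : 'I_n.+1 -> B).
Hypotheses (eM : is_morphism e) (eI : injective e) (bE : is_solution e E b).

Lemma eqn_act_lift :
  exists bG : eqn_act -> B, is_morphism bG /\ forall w, bG (eqn_class w) = free_lift b w.
Proof.
apply: (presented_morphism (R := var_relations) (f := eqn_class)).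
- exact: eqn_class_morphism.
- exact: quot_class_surj.
- by move=> u w /(quot_class_eq (gen_congruence_congruence _)).
- move=> uw /in_flat_map [q [qE]].
  by case: q qE => //= x s y t qE [] // <-; apply: bE qE.
Qed.

Lemma anchor_eval wp : In wp anchors -> free_lift b wp.1 = term_eval e (b ord_max) wp.2.
Proof.
case=> [<- // | /in_flat_map [q [qE]]].
case: q qE => //= x s a qE [] // <-.
by rewrite /free_lift /term_eval /= aact1; apply: bE qE.
Qed.

Variables (bG : eqn_act -> B) (m : nat) (R : list (free_act S m * free_act S m)).
Variable f : free_act S m -> anchor_act.
Hypotheses (bGM : is_morphism bG) (bG_class : forall w, bG (eqn_class w) = free_lift b w).
Hypotheses (fM : is_morphism f) (fS : forall p, exists u, f u = p)
  (fK : forall u w, f u = f w <-> gen_congruence R u w).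

(* The image of a generator of F_S(m) in [anchor_act] is a multiple of an
   anchor; this turns every element of F_S(m) into a term. *)
Variables (gen_anchor : 'I_m -> F * term A) (gen_scale : 'I_m -> S).
Hypotheses (gen_anchor_in : forall l, In (gen_anchor l) anchors)
  (gen_anchorP : forall l,
     proj1_sig (f (l, mone S)) = aact (eqn_class (gen_anchor l).1) (gen_scale l)).
Variable anchor_pre : F * term A -> free_act S m.
Hypothesis anchor_preP :
  forall wp, In wp anchors -> proj1_sig (f (anchor_pre wp)) = eqn_class wp.1.

Definition gen_term (u : free_act S m) : term A :=
  term_scale (gen_anchor u.1).2 (mmul (gen_scale u.1) u.2).

Definition one_var_system : list (equation 'I_1 A) :=
  flat_map (fun uw => term_equation (gen_term uw.1) (gen_term uw.2)) R ++
  flat_map (fun wp => term_equation wp.2 (gen_term (anchor_pre wp))) anchors.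

Lemma gen_term_eval u : bG (proj1_sig (f u)) = term_eval e (b ord_max) (gen_term u).
Proof.
case: u => l s; rewrite {1}free_act_gen fM /= gen_anchorP !bGM bG_class.
by rewrite anchor_eval // /gen_term term_eval_scale aactM.
Qed.

Lemma gen_term_relation uw :
  In uw R -> term_eval e (b ord_max) (gen_term uw.1) = term_eval e (b ord_max) (gen_term uw.2).
Proof.
move=> uwR; rewrite -!gen_term_eval; congr (bG (proj1_sig _)).
by apply/fK; apply: gen_congruence_base.
Qed.

Lemma anchor_pre_eval wp : In wp anchors ->
  term_eval e (b ord_max) wp.2 = term_eval e (b ord_max) (gen_term (anchor_pre wp)).
Proof. by move=> wpA; rewrite -gen_term_eval anchor_preP // bG_class anchor_eval. Qed.

Lemma one_var_system_consistent : consistent one_var_system.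
Proof.
exists B, e; split=> //; split=> //; exists (fun _ => b ord_max).
apply: is_solution_cat; apply: is_solution_flat_map => ? ?; apply: term_equation_sound => //.
- exact: gen_term_relation.
- exact: anchor_pre_eval.
Qed.

Variable c : A.
Hypothesis c_sol : is_solution id one_var_system (fun _ => c).

Lemma one_var_relation uw :
  In uw R -> term_eval id c (gen_term uw.1) = term_eval id c (gen_term uw.2).
Proof.
move=> uwR; apply: term_equation_complete eM eI (gen_term_relation uwR) _.
apply: is_solution_subset c_sol => q qE; apply/in_app_iff; left.
by apply/in_flat_map; exists uw.
Qed.

Lemma one_var_anchor wp :
  In wp anchors -> term_eval id c wp.2 = term_eval id c (gen_term (anchor_pre wp)).
Proof.
move=> wpA; apply: term_equation_complete eM eI (anchor_pre_eval wpA) _.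
apply: is_solution_subset c_sol => q qE; apply/in_app_iff; right.
by apply/in_flat_map; exists wp.
Qed.

Lemma anchor_act_morphism : exists phi : anchor_act -> A,
  is_morphism phi /\ forall u, phi (f u) = term_eval id c (gen_term u).
Proof.
pose v l := term_eval id c (gen_term (l, mone S)).
have v_lift u : free_lift v u = term_eval id c (gen_term u).
  case: u => l s; rewrite /free_lift /v -term_eval_scale.
  by rewrite /term_scale /gen_term /= mmuls1 -mmulA.
have [|phi [phiM phi_f]] := presented_morphism (v := v) fM fS (fun u w => proj1 (fK u w)).
  by move=> uw uwR; rewrite !v_lift; apply: one_var_relation.
by exists phi; split=> // u; rewrite phi_f v_lift.
Qed.

Variable phi : anchor_act -> A.
Hypotheses (phiM : is_morphism phi)
  (phi_f : forall u, phi (f u) = term_eval id c (gen_term u)).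

Lemma phi_anchor wp (wpA : In wp anchors) :
  phi (exist _ (eqn_class wp.1) (anchor_span wpA)) = term_eval id c wp.2.
Proof.
rewrite one_var_anchor // -phi_f; congr phi; apply: sig_val_inj.
by rewrite anchor_preP.
Qed.

Lemma extension_with_last_coordinate :
  exists (B' : act S) (i : A -> B') (beta : 'I_n.+1 -> B'),
  [/\ is_morphism i, injective i, is_solution i E beta & beta ord_max = i c].
Proof.
have [B' [i [psi [iM iI psiM psi_sub]]]] := amalgamation phiM.
have psi_anchor wp : In wp anchors -> psi (eqn_class wp.1) = i (term_eval id c wp.2).
  by move=> wpA; rewrite (psi_sub _ (anchor_span wpA)) phi_anchor.
have psi_class x s : psi (eqn_class (x, s)) = aact (psi (eqn_class (x, mone S))) s.
  by rewrite free_act_gen eqn_class_morphism psiM.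
exists B', i, (fun x => psi (eqn_class (x, mone S))); split=> //.
- move=> [x s y t | x s a] qE /=; rewrite -!psi_class; first by rewrite (eqn_class_var qE).
  rewrite (psi_anchor ((x, s) : F, (Some a, mone S))) /term_eval /= ?aact1 //.
  by right; apply/in_flat_map; exists (EqConst x s a); split=> //; left.
- rewrite (psi_anchor ((ord_max, mone S) : F, (None, mone S))) /term_eval /= ?aact1 //.
  by left.
Qed.

End Extension.
End LastCoordinate.

Lemma consistent_last_coordinate (S : monoid) (A : act S) (n : nat)
    (E : list (equation 'I_n.+1 A)) :
  right_coherent S -> almost_pure A -> consistent E ->
  exists (B : act S) (i : A -> B) (beta : 'I_n.+1 -> B) (c : A),
    [/\ is_morphism i, injective i, is_solution i E beta & beta ord_max = i c].
Proof.
move=> coh ap [B [e [eM [eI [b bE]]]]].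
have [bG [bGM bG_class]] := eqn_act_lift bE.
have [m [R [f [fM [fS fK]]]]] :=
  coh (eqn_act E) (quot_fin_presented _) _ (@span_closed _ _ (anchor_gens E))
    (span_fin_generated _).
have gen_spec l : exists p : (free_act S n.+1 * term A) * S,
    In p.1 (anchors E) /\ proj1_sig (f (l, mone S)) = aact (eqn_class E p.1.1) p.2.
  have [x [t [/in_map_iff [wp [<- wpA]] ->]]] := proj2_sig (f (l, mone S)).
  by exists (wp, t).
have [ga gaP] := choice _ gen_spec.
have [u0 _] := fS (exist _ _ (anchor_span (or_introl erefl))).
have pre_spec wp : exists u, In wp (anchors E) -> proj1_sig (f u) = eqn_class E wp.1.
  case: (excluded_middle_informative (In wp (anchors E))) => wpA; last by exists u0.
  by have [u fu] := fS (exist _ _ (anchor_span wpA)); exists u; rewrite fu.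
have [pre preP] := choice _ pre_spec.
have ga_in l := proj1 (gaP l); have ga_eq l := proj2 (gaP l).
have [c' c'_sol] :=
  ap _ (one_var_system_consistent eM eI bE bGM bG_class fM fK ga_in ga_eq preP).
have c_sol : is_solution id (one_var_system E R (fun l => (ga l).1) (fun l => (ga l).2) pre)
    (fun _ => c' ord0).
  suff -> : (fun _ : 'I_1 => c' ord0) = c' by [].
  by apply: functional_extensionality => x; rewrite (ord1 x).
have [phi [phiM phi_f]] :=
  anchor_act_morphism eM eI bE bGM bG_class fM fS fK ga_in ga_eq c_sol.
have := extension_with_last_coordinate eM eI bE bGM bG_class fM ga_in ga_eq preP c_sol
  phiM phi_f.
by case=> B' [i [beta ?]]; exists B', i, beta, (c' ord0).
Qed.

Lemma n_absolutely_pureS (S : monoid) (A : act S) (n : nat) :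
  right_coherent S -> almost_pure A -> n_absolutely_pure n A ->
  n_absolutely_pure n.+1 A.
Proof.
move=> coh ap IH E /(consistent_last_coordinate coh ap) [B [i [beta [c [iM iI sol betac]]]]].
have [d dsol] : exists d, is_solution id (subst_last c E) d.
  apply: IH; exists B, i; split=> //; split=> //.
  by exists (beta \o lift ord_max); apply: subst_last_solution.
by exists (extend_last d c); apply: extend_last_solution iM iI sol betac dsol.
Qed.

Lemma n_absolutely_pure0 (S : monoid) (A : act S) : n_absolutely_pure 0 A.
Proof.
move=> E _; have b : 'I_0 -> A by case.
by exists b; case=> [x | x]; case: x.
Qed.

Theorem mainTheorem1 (S : monoid) (A : act S) :
  right_coherent S -> (almost_pure A <-> absolutely_pure A).
Proof.
move=> coh; split=> [ap | ap]; last exact: ap.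
elim=> [|n IH]; first exact: n_absolutely_pure0.
exact: n_absolutely_pureS.
Qed.
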